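(* Let $m\ge1$, $\boldsymbol\gamma=(\gamma_1,\ldots,\gamma_m)\in\mathbb{N}^m$, $\boldsymbol f=(f_1,\ldots,f_{m+1})$ a tuple of arithmetic functions and $\xi:\mathbb{N}^m\to\mathbb{C}$. For every $n_1\in\mathbb{N}$ and all $n_2,\ldots,n_{m+1}\in\mathbb{N}$, \[ S^{\boldsymbol\gamma,\xi}_{\boldsymbol f}(n_1,\ldots,n_{m+1})=\sum_{l_2,\ldots,l_{m+1}=1}^{n_1}a_{n_1}(l_2,\ldots,l_{m+1})\,e(n_1,n_2l_2)\cdots e(n_1,n_{m+1}l_{m+1}) =\sum_{d_2,\ldots,d_{m+1}\mid n_1}\alpha_{n_1}(d_2,\ldots,d_{m+1})\,c(d_2,n_2)\cdots c(d_{m+1},n_{m+1}), \] where \[ a_{n_1}(l_2,\ldots,l_{m+1})=n_1^{-m}\,S^{{}^t\xi^{\boldsymbol\gamma}_{n_1}}_{{}^t\widetilde{\boldsymbol f}}(n_1,l_{m+1},\ldots,l_2),\qquad \alpha_{n_1}(d_2,\ldots,d_{m+1})=n_1^{-m}\,S^{{}^t\xi^{\boldsymbol\gamma}_{n_1}}_{{}^t\widetilde{\boldsymbol f}}\Bigl(n_1,\frac{n_1}{d_{m+1}},\ldots,\frac{n_1}{d_2}\Bigr). \] (These are the unique finite Fourier coefficients of $(n_2,\ldots,n_{m+1})\mapsto S^{\boldsymbol\gamma,\xi}_{\boldsymbol f}(n_1,\ldots,n_{m+1})$.)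
   Context: An arithmetic function is a map $f:\mathbb{N}\to\mathbb{C}$, with $f(x)=0$ for $x\notin\mathbb{N}$. $\delta^x(n):=n^x$. For $\gamma\in\mathbb{N}$, $a_\gamma(n)=1$ if $n$ is a $\gamma$-th power of a positive integer and $0$ otherwise. $e(r,n):=\exp(2\pi\sqrt{-1}\,n/r)$, and $c(k,n):=\sum_{d\mid\gcd(k,n)}\mu(k/d)\,d$ is the Ramanujan sum ($\mu$ the Möbius function). For $\boldsymbol\gamma\in\mathbb{N}^m$, arithmetic functions $g_1,\ldots,g_{m+1}$ and a weight $\eta:\mathbb{N}^m\to\mathbb{C}$, define \[ S^{\boldsymbol\gamma,\eta}_{g_1,\ldots,g_{m+1}}(n_1,\ldots,n_{m+1}):=\sum_{\substack{(d_1,\ldots,d_m)\in\mathbb{N}^m\\ d_j^{\gamma_j}\mid\gcd(n_1,\ldots,n_{j+1})\ (1\le j\le m)}}\eta(d_1^{\gamma_1},\ldots,d_m^{\gamma_m})\, g_1\Bigl(\frac{n_1}{d_1^{\gamma_1}}\Bigr)g_2\Bigl(\frac{d_1^{\gamma_1}}{d_2^{\gamma_2}}\Bigr)\cdots g_m\Bigl(\frac{d_{m-1}^{\gamma_{m-1}}}{d_m^{\gamma_m}}\Bigr)g_{m+1}\bigl(d_m^{\gamma_m}\bigr), \] and write $S^{\eta}_{g_1,\ldots,g_{m+1}}:=S^{(1,\ldots,1),\eta}_{g_1,\ldots,g_{m+1}}$. For $\boldsymbol f=(f_1,\ldots,f_{m+1})$ set ${}^t\widetilde{\boldsymbol f}:=(\delta^0f_{m+1},\delta^1f_m,\ldots,\delta^mf_1)$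 (products of functions taken pointwise), and for $n\in\mathbb{N}$ set \[ {}^t\xi^{\boldsymbol\gamma}_n(d_1,\ldots,d_m):=\Bigl(\prod_{j=1}^m a_{\gamma_j}\Bigl(\frac{n}{d_{m+1-j}}\Bigr)\Bigr)\,\xi\Bigl(\frac{n}{d_m},\ldots,\frac{n}{d_1}\Bigr) \] (only values with $d_j\mid n$ are used). *)

From HB Require Import structures.
From mathcomp Require Import all_boot all_order all_algebra.
From mathcomp Require Import reals trigo.
From mathcomp Require Import complex.
Set Implicit Arguments. Unset Strict Implicit. Unset Printing Implicit Defensive.
Import Order.TTheory GRing.Theory Num.Theory.
Local Open Scope ring_scope.

Section Defs.
Variable R : realType.
Local Notation C := R[i].

Definition moebius (n : nat) : int :=
  if n == 0%N then 0
  else if all (fun p => logn p n <= 1)%N (primes n) then (-1) ^+ size (primes n)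
  else 0.

Definition ramanujan (k n : nat) : C :=
  \sum_(d <- divisors (gcdn k n)) (moebius (k %/ d))%:~R * d%:R.

Definition ee (r n : nat) : C :=
  (cos (2 * pi * n%:R / r%:R) +i* sin (2 * pi * n%:R / r%:R))%C.

Definition apow (g k : nat) : bool :=
  (0 < k)%N && [exists r : 'I_k.+1, (0 < r)%N && (r ^ g == k)%N].

(* g(a/b) with the convention that g vanishes off the positive integers
   (only used with a, b > 0) *)
Definition fq (g : nat -> C) (a b : nat) : C :=
  if (b %| a)%N then g (a %/ b)%N else 0.

(* S^{gamma,eta}_{g_1..g_{m+1}}(n_1..n_{m+1}); g i = g_{i+1}, n i = n_{i+1}.
   Since d_j >= 1 and d_j^{gamma_j} | n_1 with gamma_j >= 1, d_j <= n_1. *)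
Definition Ssum (m : nat) (gam : 'I_m -> nat) (eta : m.-tuple nat -> C)
    (g : nat -> nat -> C) (n : nat -> nat) : C :=
  \sum_(d : {ffun 'I_m -> 'I_(n 0%N).+1} |
         [forall j : 'I_m, (0 < d j)%N &&
            (d j ^ gam j %| \big[gcdn/0%N]_(0 <= i < j.+2) n i)%N])
    (let P := mktuple (fun j => (nat_of_ord (d j)) ^ gam j)%N in
     eta P * \prod_(i < m.+1) fq (g i) (nth 1%N (n 0%N :: P) i) (nth 1%N (n 0%N :: P) i.+1)).

(* ^t tilde f = (delta^0 f_{m+1}, delta^1 f_m, ..., delta^m f_1) *)
Definition ftil (m : nat) (f : nat -> nat -> C) : nat -> nat -> C :=
  fun i x => (x%:R) ^+ i * f (m - i)%N x.

Definition txi (m : nat) (gam : 'I_m -> nat) (xi : m.-tuple nat -> C) (n : nat)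
    (d : m.-tuple nat) : C :=
  (\prod_(j < m) ((tnth d (rev_ord j) %| n)%N && apow (gam j) (n %/ tnth d (rev_ord j))%N)%:R)
  * xi (mktuple (fun j => (n %/ tnth d (rev_ord j))%N)).

Definition ext (m : nat) (t : 'I_m -> nat) : nat -> nat :=
  fun i => oapp t 0%N (insub i).

(* the argument vector (n1, t_{m}, ..., t_1) where t is 0-indexed: t j = x_{j+2} *)
Definition revargs (m n1 : nat) (t : nat -> nat) : nat -> nat :=
  fun k => if k == 0%N then n1 else t (m - k)%N.

(* a_{n1}(l_2..l_{m+1}) ; l j = l_{j+2} *)
Definition acoef (m : nat) (gam : 'I_m -> nat) (f : nat -> nat -> C)
    (xi : m.-tuple nat -> C) (n1 : nat) (l : 'I_m -> nat) : C :=
  (n1%:R ^- m) * Ssum (fun _ => 1%N) (txi gam xi n1) (ftil m f) (revargs m n1 (ext l)).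

(* alpha_{n1}(d_2..d_{m+1}) ; d j = d_{j+2} *)
Definition alphacoef (m : nat) (gam : 'I_m -> nat) (f : nat -> nat -> C)
    (xi : m.-tuple nat -> C) (n1 : nat) (d : 'I_m -> nat) : C :=
  (n1%:R ^- m) * Ssum (fun _ => 1%N) (txi gam xi n1) (ftil m f)
                      (revargs m n1 (fun k => n1 %/ ext d k)%N).

End Defs.

(* Only chains d_m^{γ_m} | ... | d_1^{γ_1} | n_1 contribute to S, so the gcd condition
   reduces to d_j^{γ_j} | n_1 and d_j^{γ_j} | n_{j+1}.  The substitution
   e_j = n_1 / d_{m+1-j}^{γ_{m+1-j}} ([codiv_pow]) maps these chains bijectively onto the
   divisor tuples of n_1 whose cofactors n_1 / e_{m+1-j} are γ_j-th powers, and the weights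
   δ^i of the transposed sum telescope, so that the summand of S at d is
   n_1^{-m} ∏_j d_j^{γ_j} times the transposed summand at e ([tSsum_term_codiv_pow]).
   Writing K(e, N) = (n_1/e) [n_1/e | N], this gives
     S(n) = n_1^{-m} ∑_{e_j | n_1} (transposed summand at e) ∏_j K(e_{m+1-j}, n_{j+1})
   ([Sdual]).  Both expansions reduce to the same expression, since
     K(e, N) = ∑_{l=1}^{n_1} [e | l] e(n_1, N l)     (geometric sums of roots of unity),
     K(e, N) = ∑_{d | n_1} [e | n_1/d] c(d, N)        (∑_{d | D} c(d, N) = D [D | N]). *)

From HB Require Import structures.
From mathcomp Require Import all_boot all_order all_algebra.
From mathcomp Require Import reals trigo.
From mathcomp Require Import complex.
Import Order.TTheory GRing.Theory Num.Theory.
Local Open Scope ring_scope.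

From mathcomp Require Import ring lra.
Set Implicit Arguments. Unset Strict Implicit. Unset Printing Implicit Defensive.

Section RootsOfUnity.
Variable R : realType.
Local Notation C := R[i].

Definition expi (t : R) : C := (cos t +i* sin t)%C.

Lemma expiD a b : expi (a + b) = expi a * expi b.
Proof. by rewrite /expi cosD sinD; simpc; congr (_ +i* _)%C; ring. Qed.

Lemma expiMn a k : expi (a *+ k) = expi a ^+ k.
Proof.
elim: k => [|k IHk]; first by rewrite /expi mulr0n cos0 sin0.
by rewrite mulrS expiD IHk exprS.
Qed.

Lemma expi_neq1 t : 0 < t < pi *+ 2 -> expi t != 1.
Proof.
move=> /andP[t_gt0 t_lt]; apply/eqP => /(congr1 (@complex.Re R)) /=.
have sin_gt0 : 0 < sin (t / 2).
  by apply: sin_gt0_pi; rewrite divr_gt0 //= ltr_pdivrMr // mulr_natr.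
rewrite [t in cos t]splitr -mulr2n cos_mulr2n cos2sin2; nra.
Qed.

Lemma eeE r x : ee R r x = expi (2 * pi * x%:R / r%:R).
Proof. by []. Qed.

Lemma eeD r x y : ee R r (x + y) = ee R r x * ee R r y.
Proof. by rewrite !eeE -expiD natrD mulrDr mulrDl. Qed.

Lemma eeM r x k : ee R r (x * k) = ee R r x ^+ k.
Proof. by rewrite !eeE -expiMn natrM -mulr_natr; congr expi; ring. Qed.

Lemma eeMl e r x : (0 < e)%N -> ee R (e * r) (e * x) = ee R r x.
Proof.
move=> e_gt0; have e_neq0 : e%:R != 0 :> R by rewrite pnatr_eq0 -lt0n.
rewrite !eeE !natrM; congr expi.
have [->|r_neq0] := eqVneq (r%:R : R) 0; first by rewrite !mulr0 !invr0 !mulr0.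
by field; apply/andP.
Qed.

Lemma ee_self r : (0 < r)%N -> ee R r r = 1.
Proof.
move=> r_gt0; rewrite eeE mulfK ?pnatr_eq0 -?lt0n //.
by rewrite mulr_natl /expi cos2pi sin2pi.
Qed.

Lemma ee_eq1 r x : (0 < r)%N -> (ee R r x == 1) = (r %| x)%N.
Proof.
move=> r_gt0; rewrite {1}(divn_eq x r) eeD mulnC eeM ee_self // expr1n mul1r /dvdn.
have [->|rem_gt0] := posnP (x %% r); first by rewrite -(muln0 r) eeM expr0 !eqxx.
apply/negbTE; rewrite eeE; apply: expi_neq1.
have r_pos : (0 < r%:R :> R) by rewrite ltr0n.
have ratio_gt0 : 0 < (x %% r)%:R / r%:R :> R by rewrite divr_gt0 // ltr0n.
have ratio_lt1 : (x %% r)%:R / r%:R < 1 :> R by rewrite ltr_pdivrMr // mul1r ltr_nat ltn_pmod.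
have := pi_gt0 R; rewrite -mulrA mulr2n => pi_gt0; apply/andP; split; nra.
Qed.

Lemma sum_ee r N : (0 < r)%N ->
  \sum_(k < r) ee R r (N * k.+1) = (r * (r %| N))%:R.
Proof.
move=> r_gt0.
have -> : \sum_(k < r) ee R r (N * k.+1) = ee R r N * \sum_(k < r) ee R r N ^+ k.
  by rewrite mulr_sumr; apply: eq_bigr => k _; rewrite eeM exprS.
have [/dvdnP[c ->]|N_ndvd] := boolP (r %| N)%N.
  rewrite mulnC eeM ee_self // expr1n mul1r muln1.
  by under eq_bigr do rewrite expr1n; rewrite sumr_const card_ord.
have : (ee R r N - 1) * \sum_(k < r) ee R r N ^+ k = 0.
  by rewrite -subrX1 -eeM mulnC eeM ee_self // expr1n subrr.
by move/eqP; rewrite mulf_eq0 subr_eq0 ee_eq1 // (negbTE N_ndvd) => /eqP ->; rewrite mulr0 muln0.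
Qed.

Lemma sum_ord_multiples (V : nmodType) (F : nat -> V) e r : (0 < e)%N ->
  \sum_(x < e * r | (e %| x.+1)%N) F x.+1 = \sum_(k < r) F (e * k.+1)%N.
Proof.
move=> e_gt0; rewrite big_mkcond /=; elim: r => [|r IHr]; first by rewrite muln0 !big_ord0.
rewrite mulnS addnC big_split_ord /= {}IHr big_ord_recr /=; congr (_ + _).
case: e e_gt0 => // e _; rewrite big_ord_recr /= big1 ?add0r => [|i _].
  by rewrite -addnS -mulnSr dvdn_mulr.
by rewrite -addnS dvdn_addr ?dvdn_mulr // gtnNdvd ?ltnS.
Qed.

Lemma sum_ee_multiples n1 e N : (0 < n1)%N -> (e %| n1)%N ->
  \sum_(x < n1 | (e %| x.+1)%N) ee R n1 (N * x.+1) = (n1 %/ e * (n1 %/ e %| N))%:R.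
Proof.
move=> n1_gt0 /dvdnP[r n1E]; move: n1_gt0; rewrite n1E muln_gt0 => /andP[r_gt0 e_gt0].
rewrite mulnK // mulnC (sum_ord_multiples (fun y => ee R (e * r) (N * y))) //.
by rewrite -sum_ee //; apply: eq_bigr => k _; rewrite mulnCA eeMl.
Qed.

End RootsOfUnity.

Lemma moebius_mul_prime p d : prime p -> (0 < d)%N -> ~~ (p %| d)%N ->
  moebius (p * d) = - moebius d.
Proof.
move=> p_pr d_gt0 p_ndvd; have p_gt0 := prime_gt0 p_pr.
have primes_pd : perm_eq (primes (p * d)) (p :: primes d).
  apply: uniq_perm; rewrite /= ?primes_uniq ?andbT ?mem_primes ?p_pr ?d_gt0 //.
  by move=> q; rewrite primesM // primes_prime // !inE.
have logn_pd q : prime q -> logn q (p * d) = ((q == p) + logn q d)%N.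
  by move=> q_pr; rewrite lognM // logn_prime.
rewrite /moebius muln_eq0 !eqn0Ngt p_gt0 d_gt0 /= (perm_all _ primes_pd) (perm_size primes_pd) /=.
have -> : logn p (p * d) = 1%N.
  rewrite logn_pd // eqxx; apply/eqP; rewrite eqSS -leqn0 leqNgt logn_gt0.
  by rewrite mem_primes p_pr d_gt0 (negbTE p_ndvd).
rewrite (@eq_in_all _ _ (fun q => logn q d <= 1)%N); last first.
  move=> q; rewrite mem_primes => /and3P[q_pr _ q_dvd]; rewrite logn_pd //.
  by case: eqP => // qp; rewrite -qp q_dvd in p_ndvd.
by case: all; rewrite ?oppr0 // exprS mulN1r.
Qed.

Lemma moebius_mul_prime_dvd p d : prime p -> (0 < d)%N -> (p %| d)%N -> moebius (p * d) = 0.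
Proof.
move=> p_pr d_gt0 p_dvd; have p_gt0 := prime_gt0 p_pr.
rewrite /moebius muln_eq0 !eqn0Ngt p_gt0 d_gt0 /=; case: allP => // logn_le1.
have := logn_le1 p; rewrite mem_primes p_pr muln_gt0 p_gt0 d_gt0 dvdn_mulr //.
rewrite lognM // logn_prime // eqxx add1n ltnS leqn0 eqn0Ngt logn_gt0 mem_primes.
by rewrite p_pr d_gt0 p_dvd => /(_ isT).
Qed.

Lemma divisors_multiples D e : (0 < D)%N -> (e %| D)%N ->
  perm_eq [seq d <- divisors D | (e %| d)%N] [seq (e * k)%N | k <- divisors (D %/ e)].
Proof.
move=> D_gt0 e_dvd; have e_gt0 := dvdn_gt0 D_gt0 e_dvd.
have De_gt0 : (0 < D %/ e)%N by rewrite divn_gt0 // dvdn_leq.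
apply: uniq_perm; first by rewrite filter_uniq ?divisors_uniq.
  by rewrite map_inj_uniq ?divisors_uniq // => x y /eqP; rewrite eqn_pmul2l // => /eqP.
move=> x; rewrite mem_filter -dvdn_divisors //; apply/andP/mapP.
  move=> [/dvdnP[k ->] kD]; exists k; last by rewrite mulnC.
  by rewrite -dvdn_divisors // -(dvdn_pmul2r e_gt0) divnK.
move=> [k]; rewrite -dvdn_divisors // => kD ->; split; first exact: dvdn_mulr.
by rewrite -(divnK e_dvd) mulnC dvdn_pmul2r.
Qed.

Lemma divisors_coprime_prime n p : (0 < n)%N -> prime p -> (p %| n)%N ->
  perm_eq [seq d <- divisors n | ~~ (p %| d)%N] [seq d <- divisors (n %/ p) | ~~ (p %| d)%N].
Proof.
move=> n_gt0 p_pr p_dvd; have np_gt0 : (0 < n %/ p)%N by rewrite divn_gt0 ?prime_gt0 // dvdn_leq.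
apply: uniq_perm; rewrite ?filter_uniq ?divisors_uniq // => x.
rewrite !mem_filter -!dvdn_divisors //; case: (boolP (p %| x)%N) => //= p_ndvd.
apply/idP/idP; last by move=> x_dvd; apply: dvdn_trans x_dvd (dvdn_div p_dvd).
by rewrite -{1}(divnK p_dvd) Gauss_dvdl // coprime_sym prime_coprime.
Qed.

Lemma sum_moebius_divisors n : (0 < n)%N ->
  \sum_(d <- divisors n) moebius d = (n == 1%N)%:R.
Proof.
move=> n_gt0; case: (ltngtP n 1) => [|n_gt1|->]; first by rewrite ltnS leqn0 (gtn_eqF n_gt0).
  set p := pdiv n; have p_pr : prime p by exact: pdiv_prime.
  have p_dvd : (p %| n)%N by exact: pdiv_dvd.
  have np_gt0 : (0 < n %/ p)%N by rewrite divn_gt0 ?prime_gt0 // dvdn_leq.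
  rewrite (bigID (fun d => p %| d)%N) /=.
  rewrite -(big_filter _ (fun d => p %| d)%N) -(big_filter _ (fun d => ~~ (p %| d))%N).
  rewrite (perm_big _ (divisors_multiples n_gt0 p_dvd)) big_map.
  rewrite (perm_big _ (divisors_coprime_prime n_gt0 p_pr p_dvd)) big_filter.
  rewrite (bigID (fun d => p %| d)%N) /= big1_seq ?add0r => [|k /andP[pk]]; last first.
    by rewrite -dvdn_divisors // => /(dvdn_gt0 np_gt0) k_gt0; rewrite moebius_mul_prime_dvd.
  rewrite -big_split /= big1_seq // => k /andP[p_ndvd].
  by rewrite -dvdn_divisors // => /(dvdn_gt0 np_gt0) k_gt0; rewrite moebius_mul_prime // addNr.
by rewrite /divisors /= big_cons big_nil addr0.
Qed.

Lemma divisors_codivisors n e : (0 < n)%N -> (e %| n)%N ->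
  perm_eq [seq x <- divisors n | (e %| n %/ x)%N] (divisors (n %/ e)).
Proof.
move=> n_gt0 e_dvd; have e_gt0 := dvdn_gt0 n_gt0 e_dvd.
have ne_gt0 : (0 < n %/ e)%N by rewrite divn_gt0 // dvdn_leq.
apply: uniq_perm; rewrite ?filter_uniq ?divisors_uniq // => x.
rewrite mem_filter -!dvdn_divisors //; have [x_dvd|x_ndvd] := boolP (x %| n)%N.
  by rewrite andbT !dvdn_divRL // mulnC.
rewrite andbF; apply/esym/negbTE; apply: contra x_ndvd; rewrite dvdn_divRL //.
exact: dvdn_trans (dvdn_mulr e (dvdnn x)).
Qed.

Lemma big_ord_divisors (V : nmodType) n (F : nat -> V) : (0 < n)%N ->
  \sum_(x < n.+1 | ((0 < x) && (x %| n))%N) F x = \sum_(x <- divisors n) F x.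
Proof.
move=> n_gt0; rewrite -(big_mkord (fun x => (0 < x) && (x %| n))%N) -big_filter.
apply: perm_big; apply: uniq_perm; rewrite ?filter_uniq ?iota_uniq ?divisors_uniq // => x.
rewrite mem_filter mem_iota -dvdn_divisors // add0n.
case: (boolP (x %| n)%N) => x_dvd; rewrite ?andbF //=.
by rewrite (dvdn_gt0 n_gt0 x_dvd) ltnS (dvdn_leq n_gt0 x_dvd).
Qed.

Section RamanujanSums.
Variable R : realType.
Local Notation C := R[i].

Lemma sum_moebius_multiples D x : (0 < D)%N -> (x %| D)%N ->
  \sum_(d <- divisors D | (x %| d)%N) (moebius (d %/ x))%:~R = (x == D)%:R :> C.
Proof.
move=> D_gt0 x_dvd; have x_gt0 := dvdn_gt0 D_gt0 x_dvd.
have Dx_gt0 : (0 < D %/ x)%N by rewrite divn_gt0 // dvdn_leq.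
rewrite -big_filter (perm_big _ (divisors_multiples D_gt0 x_dvd)) big_map.
under eq_bigr do rewrite mulKn //.
have := congr1 (fun z : int => z%:~R : C) (sum_moebius_divisors Dx_gt0).
rewrite rmorph_sum /= rmorph_nat => ->; congr _%:R.
by rewrite -(eqn_pmul2r x_gt0) divnK // mul1n eq_sym.
Qed.

Lemma sum_ramanujan_divisors D N : (0 < D)%N ->
  \sum_(d <- divisors D) ramanujan R d N = (D * (D %| N))%:R.
Proof.
move=> D_gt0.
have divisors_gcd d : d \in divisors D ->
    perm_eq (divisors (gcdn d N)) [seq x <- divisors D | (x %| d) && (x %| N)]%N.
  rewrite -dvdn_divisors // => d_dvd; have d_gt0 := dvdn_gt0 D_gt0 d_dvd.
  apply: uniq_perm; rewrite ?filter_uniq ?divisors_uniq // => x.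
  rewrite mem_filter -!dvdn_divisors ?gcdn_gt0 ?d_gt0 // dvdn_gcd.
  by case: (boolP (x %| d)%N) => //= x_dvd; rewrite (dvdn_trans x_dvd d_dvd) andbT.
transitivity (\sum_(d <- divisors D) \sum_(x <- divisors D | ((x %| d) && (x %| N))%N)
    (moebius (d %/ x))%:~R * x%:R : C).
  apply: eq_big_seq => d /divisors_gcd perm_d.
  by rewrite /ramanujan (perm_big _ perm_d) big_filter.
rewrite (exchange_big_dep (fun x => x %| N)%N) /=; last by move=> ? ? _ /andP[].
transitivity (\sum_(x <- divisors D | (x %| N)%N) (x == D)%:R * x%:R : C).
  rewrite big_seq_cond [RHS]big_seq_cond; apply: eq_bigr => x /andP[].
  rewrite -dvdn_divisors // => x_dvd x_dvdN.
  rewrite -(sum_moebius_multiples D_gt0 x_dvd) mulr_suml.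
  by apply: eq_bigl => d; rewrite x_dvdN andbT.
rewrite big_mkcond (bigD1_seq D) ?divisors_id ?divisors_uniq //= eqxx mul1r.
rewrite big1_seq => [|x /andP[x_neq _]]; last by rewrite (negbTE x_neq) mul0r if_same.
by rewrite addr0; case: (D %| N)%N; rewrite ?muln1 ?muln0.
Qed.

Lemma sum_ramanujan_codivisors n e N : (0 < n)%N -> (e %| n)%N ->
  \sum_(x <- divisors n | (e %| n %/ x)%N) ramanujan R x N = (n %/ e * (n %/ e %| N))%:R.
Proof.
move=> n_gt0 e_dvd; rewrite -big_filter (perm_big _ (divisors_codivisors n_gt0 e_dvd)).
by rewrite sum_ramanujan_divisors // divn_gt0 (dvdn_gt0 n_gt0 e_dvd, dvdn_leq).
Qed.

End RamanujanSums.

Lemma dvdn_chain (a : nat -> nat) M : (forall k, (k < M)%N -> (a k.+1 %| a k)%N) ->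
  forall i k, (i <= k)%N -> (k <= M)%N -> (a k %| a i)%N.
Proof.
move=> a_dvd i; elim=> [|k IHk]; first by rewrite leqn0 => /eqP ->.
rewrite leq_eqVlt => /predU1P[-> //|]; rewrite ltnS => ik kM.
exact: dvdn_trans (a_dvd k kM) (IHk ik (ltnW kM)).
Qed.

Lemma dvdn_codiv N A B : (0 < N)%N -> (A %| N)%N -> (B %| N)%N ->
  (N %/ A %| N %/ B)%N = (B %| A)%N.
Proof.
move=> N_gt0 A_dvd B_dvd; have A_gt0 := dvdn_gt0 N_gt0 A_dvd.
rewrite dvdn_divRL // -[X in (_ %| X)%N](divnK A_dvd) dvdn_pmul2l //.
by rewrite divn_gt0 // dvdn_leq.
Qed.

Lemma divn_codiv N A B : (0 < N)%N -> (A %| N)%N -> (B %| A)%N ->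
  (N %/ B %/ (N %/ A) = A %/ B)%N.
Proof.
move=> N_gt0 A_dvd B_dvd; have B_dvdN := dvdn_trans B_dvd A_dvd.
by rewrite divnA // divn_mulAC // -muln_divA // mulKn.
Qed.

Lemma codivK N x : (0 < N)%N -> (x %| N)%N -> (N %/ (N %/ x))%N = x.
Proof. by move=> N_gt0 x_dvd; rewrite divnA // mulKn. Qed.

Lemma prodr_natb (S : comPzSemiRingType) (I : finType) (b : pred I) :
  \prod_(i : I) (b i)%:R = [forall i, b i]%:R :> S.
Proof.
have [b_all|/forallPn[i /negbTE bi]] := boolP [forall i, b i].
  by rewrite big1 // => i _; rewrite (forallP b_all).
by rewrite (bigD1 i) //= bi mul0r.
Qed.

Lemma nth_cons_mktuple m x0 x (F : 'I_m -> nat) (j : 'I_m) : nth x0 (x :: mktuple F) j.+1 = F j.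
Proof. exact: nth_mktuple. Qed.

Lemma nth_cons_mktuple_default m x0 x (F : 'I_m -> nat) k : (m < k)%N ->
  nth x0 (x :: mktuple F) k = x0.
Proof. by move=> km; rewrite nth_default // -cat1s size_cat size_tuple add1n. Qed.

Section SsumChain.
Variable R : realType.
Local Notation C := R[i].

Definition Ssum_term m (gam : 'I_m -> nat) (eta : m.-tuple nat -> C) (g : nat -> nat -> C)
    n1 (d : {ffun 'I_m -> 'I_n1.+1}) : C :=
  let P := mktuple (fun j => (nat_of_ord (d j)) ^ gam j)%N in
  eta P * \prod_(i < m.+1) fq (g i) (nth 1%N (n1 :: P) i) (nth 1%N (n1 :: P) i.+1).

Lemma SsumE m (gam : 'I_m -> nat) eta g n :
  Ssum gam eta g n = \sum_(d : {ffun 'I_m -> 'I_(n 0%N).+1} |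
         [forall j : 'I_m, (0 < d j)%N &&
            (d j ^ gam j %| \big[gcdn/0%N]_(0 <= i < j.+2) n i)%N]) Ssum_term gam eta g d.
Proof. by []. Qed.

Lemma Ssum_term_chain m (gam : 'I_m -> nat) eta g n1 (d : {ffun 'I_m -> 'I_n1.+1}) :
  Ssum_term gam eta g d != 0 ->
  forall i j : 'I_m, (i <= j)%N -> (d j ^ gam j %| d i ^ gam i)%N.
Proof.
rewrite mulf_eq0 negb_or => /andP[_ /prodf_neq0 fq_neq0] i j ij.
pose a := nth 1%N (n1 :: mktuple (fun j => d j ^ gam j))%N.
have a_dvd k : (k < m.+1)%N -> (a k.+1 %| a k)%N.
  by move=> km; have := fq_neq0 (Ordinal km) isT; rewrite /fq; case: ifP; rewrite ?eqxx.
have := dvdn_chain a_dvd (i := i.+1) (k := j.+1) ij (ltnW (ltn_ord j)).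
by rewrite /a !nth_cons_mktuple.
Qed.

Lemma Ssum_chainE m (gam : 'I_m -> nat) eta g (n : nat -> nat) :
  Ssum gam eta g n = \sum_(d : {ffun 'I_m -> 'I_(n 0%N).+1} |
      [forall j, [&& 0 < d j, d j ^ gam j %| n 0%N & d j ^ gam j %| n j.+1]]%N)
    Ssum_term gam eta g d.
Proof.
rewrite SsumE big_mkcond [RHS]big_mkcond; apply: eq_bigr => d _.
have [->|/Ssum_term_chain chain] := eqVneq (Ssum_term gam eta g d) 0; first by rewrite !if_same.
congr (if _ then _ else _); apply/forallP/forallP => dvd_n j; have /andP[d_gt0] := dvd_n j.
  by rewrite big_mkord d_gt0 => /dvdn_biggcdP dvd_gcd; rewrite (dvd_gcd ord0) ?(dvd_gcd ord_max).
move=> /andP[dvd_n0 _]; rewrite d_gt0 big_mkord; apply/dvdn_biggcdP => -[[|i] i_lt] _ //=.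
rewrite !ltnS in i_lt; have i_lt_m : (i < m)%N := leq_ltn_trans i_lt (ltn_ord j).
have /and3P[_ _ dvd_ni] := dvd_n (Ordinal i_lt_m).
exact: dvdn_trans (chain (Ordinal i_lt_m) j i_lt) dvd_ni.
Qed.

Lemma Ssum_split m (gam : 'I_m -> nat) eta g (n : nat -> nat) :
  Ssum gam eta g n = \sum_(d : {ffun 'I_m -> 'I_(n 0%N).+1} |
      [forall j, (0 < d j) && (d j ^ gam j %| n 0%N)]%N)
    Ssum_term gam eta g d * \prod_(j < m) (d j ^ gam j %| n j.+1)%:R.
Proof.
rewrite Ssum_chainE big_mkcond [RHS]big_mkcond; apply: eq_bigr => d _.
rewrite -!mulrb -[LHS]mulr_natr -[RHS]mulr_natr -!prodr_natb -mulrA -big_split /=.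
by congr (_ * _); apply: eq_bigr => j _; rewrite andbA -mulnb natrM mulrC.
Qed.

End SsumChain.

Lemma prod_ratio_telescope (F : fieldType) m (b : nat -> F) :
  (forall k, (0 < k <= m)%N -> b k != 0) ->
  \prod_(k < m.+1) (b k / b k.+1) ^+ (m - k) * \prod_(k < m) b k.+1 = b 0%N ^+ m.
Proof.
elim: m b => [|m IHm] b b_neq0; first by rewrite big_ord1 big_ord0 !expr0 mulr1.
rewrite big_ord_recl [X in _ * X]big_ord_recl subn0.
under eq_bigr do rewrite subSS.
rewrite mulrACA (IHm (fun k => b k.+1)) => [|k /andP[_ km]]; last exact: b_neq0.
by rewrite -mulrA -exprS -exprMn divfK // b_neq0.
Qed.

Section Telescope.
Variable R : realType.
Local Notation C := R[i].

Lemma fq_ftil_codiv m (g : nat -> nat -> C) N A B i : (0 < N)%N -> (A %| N)%N -> (B %| N)%N ->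
  fq (ftil m g i) (N %/ B) (N %/ A) = (A%:R / B%:R) ^+ i * fq (g (m - i)%N) A B.
Proof.
move=> N_gt0 A_dvd B_dvd; have B_gt0 := dvdn_gt0 N_gt0 B_dvd.
rewrite /fq dvdn_codiv //; case: ifP => [B_dvdA|_]; last by rewrite mulr0.
by rewrite divn_codiv // /ftil natr_div // unitfE pnatr_eq0 -lt0n.
Qed.

Lemma prod_fq_ftil_codiv m (g : nat -> nat -> C) N (a : nat -> nat) : (0 < N)%N ->
  (forall k, (k <= m.+1)%N -> (a k %| N)%N) -> a 0%N = N ->
  \prod_(i < m.+1) fq (ftil m g i) (N %/ a (m.+1 - i)%N) (N %/ a (m - i)%N)
    * \prod_(k < m) (a k.+1)%:R
  = N%:R ^+ m * \prod_(k < m.+1) fq (g k) (a k) (a k.+1).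
Proof.
move=> N_gt0 a_dvd a0; pose b k : C := (a k)%:R.
have b_neq0 k : (0 < k <= m)%N -> b k != 0.
  move=> /andP[_ km]; rewrite pnatr_eq0 -lt0n (dvdn_gt0 N_gt0) // a_dvd //; exact: ltnW.
rewrite (reindex_inj rev_ord_inj) /=.
transitivity (\prod_(k < m.+1) (b k / b k.+1) ^+ (m - k) * \prod_(k < m) b k.+1
              * \prod_(k < m.+1) fq (g k) (a k) (a k.+1)).
  rewrite mulrAC -big_split /=; congr (_ * _); apply: eq_bigr => k _.
  have k_le : (k <= m)%N := ltn_ord k.
  have a_dvd_k : (a k %| N)%N by apply: a_dvd; exact: ltnW.
  have a_dvd_k1 : (a k.+1 %| N)%N by exact: a_dvd.
  by rewrite subSS subSn ?leq_subr // subKn // fq_ftil_codiv // subKn.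
by rewrite prod_ratio_telescope // /b a0.
Qed.

End Telescope.

Lemma ext_ord m (t : 'I_m -> nat) (j : 'I_m) : ext t j = t j.
Proof. by rewrite /ext valK. Qed.

Definition iroot g x : nat :=
  if [pick r : 'I_x.+1 | (0 < r) && (r ^ g == x)]%N is Some r then nat_of_ord r else 0%N.

Lemma iroot_le g x : (iroot g x <= x)%N.
Proof. by rewrite /iroot; case: pickP => // r _; rewrite -ltnS ltn_ord. Qed.

Lemma irootP g x : apow g x -> (0 < iroot g x)%N /\ (iroot g x ^ g = x)%N.
Proof.
rewrite /apow /iroot => /andP[_ /existsP[r r_root]].
by case: pickP => [s /andP[s_gt0 /eqP //]|/(_ r)]; rewrite r_root.
Qed.

Lemma apow_expn g r : (0 < g)%N -> (0 < r)%N -> apow g (r ^ g).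
Proof.
move=> g_gt0 r_gt0; rewrite /apow expn_gt0 r_gt0 /=; apply/existsP.
have r_lt : (r < (r ^ g).+1)%N by rewrite ltnS -{1}(expn1 r) leq_pexp2l.
by exists (Ordinal r_lt); rewrite /= r_gt0 eqxx.
Qed.

Lemma iroot_expn g r : (0 < g)%N -> (0 < r)%N -> iroot g (r ^ g) = r.
Proof.
move=> g_gt0 r_gt0; have [_ /eqP] := irootP (apow_expn g_gt0 r_gt0).
by rewrite eqn_exp2r // => /eqP.
Qed.

Section Transposition.
Variable R : realType.
Local Notation C := R[i].
Variables (m : nat) (gam : 'I_m -> nat) (f : nat -> nat -> C) (xi : m.-tuple nat -> C).

Definition tSsum_term n1 (e : {ffun 'I_m -> 'I_n1.+1}) : C :=
  Ssum_term (fun _ => 1%N) (txi gam xi n1) (ftil m f) e.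

Definition Sdual n1 (n : nat -> nat) : C :=
  n1%:R ^- m * \sum_(e : {ffun 'I_m -> 'I_n1.+1} | [forall j, (0 < e j) && (e j %| n1)]%N)
    tSsum_term e * \prod_(j < m) (n1 %/ e (rev_ord j) * (n1 %/ e (rev_ord j) %| n j.+1))%:R.

Lemma Ssum_transposed n1 (t : nat -> nat) :
  Ssum (fun _ => 1%N) (txi gam xi n1) (ftil m f) (revargs m n1 t) =
  \sum_(e : {ffun 'I_m -> 'I_n1.+1} | [forall j, (0 < e j) && (e j %| n1)]%N)
    tSsum_term e * \prod_(j < m) (e (rev_ord j) %| t j)%:R.
Proof.
rewrite Ssum_split; apply: eq_bigr => e _; congr (_ * _).
rewrite (reindex_inj rev_ord_inj); apply: eq_bigr => j _.
by rewrite /revargs /= expn1 subnSK // subKn // ltnW.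
Qed.

Lemma acoef_expansion n1 (n : nat -> nat) : (0 < n1)%N ->
  \sum_(l : {ffun 'I_m -> 'I_n1}) acoef gam f xi n1 (fun j => (l j).+1)
    * \prod_(j < m) ee R n1 (n j.+1 * (l j).+1)
  = Sdual n1 n.
Proof.
move=> n1_gt0; rewrite /Sdual.
under eq_bigr do rewrite /acoef Ssum_transposed -mulrA mulr_suml.
rewrite -mulr_sumr exchange_big /=; congr (_ * _); apply: eq_bigr => e /forallP e_dvd.
under eq_bigr do under eq_bigr do rewrite ext_ord.
under eq_bigr do rewrite -mulrA -big_split /=.
rewrite -mulr_sumr -(bigA_distr_bigA (fun j (x : 'I_n1) =>
  (e (rev_ord j) %| x.+1)%:R * ee R n1 (n j.+1 * x.+1))) /=.
congr (_ * _); apply: eq_bigr => j _; have /andP[_ e_dvd_n1] := e_dvd (rev_ord j).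
rewrite -(sum_ee_multiples _ _ n1_gt0 e_dvd_n1) [RHS]big_mkcond; apply: eq_bigr => x _.
by rewrite mulr_natl mulrb.
Qed.

Lemma alphacoef_expansion n1 (n : nat -> nat) : (0 < n1)%N ->
  \sum_(d : {ffun 'I_m -> 'I_n1.+1} | [forall j, (0 < d j) && (d j %| n1)]%N)
    alphacoef gam f xi n1 (fun j => nat_of_ord (d j)) * \prod_(j < m) ramanujan R (d j) (n j.+1)
  = Sdual n1 n.
Proof.
move=> n1_gt0; rewrite /Sdual.
under eq_bigr do rewrite /alphacoef Ssum_transposed -mulrA mulr_suml.
under eq_bigr do under eq_bigr do under eq_bigr do rewrite ext_ord.
rewrite -mulr_sumr exchange_big /=; congr (_ * _); apply: eq_bigr => e /forallP e_dvd.
under eq_bigr do rewrite -mulrA -big_split /=.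
rewrite -mulr_sumr big_mkcond /=; congr (_ * _).
transitivity (\sum_(d : {ffun 'I_m -> 'I_n1.+1}) \prod_(j < m)
    (((0 < d j) && (d j %| n1))%N%:R
      * ((e (rev_ord j) %| n1 %/ d j)%:R * ramanujan R (d j) (n j.+1)))).
  by apply: eq_bigr => d _; rewrite [RHS]big_split /= prodr_natb mulr_natl mulrb.
rewrite -(bigA_distr_bigA (fun j (x : 'I_n1.+1) => ((0 < x) && (x %| n1))%N%:R
  * ((e (rev_ord j) %| n1 %/ x)%:R * ramanujan R x (n j.+1)))) /=.
apply: eq_bigr => j _; have /andP[_ e_dvd_n1] := e_dvd (rev_ord j).
rewrite -(sum_ramanujan_codivisors _ _ n1_gt0 e_dvd_n1) [RHS]big_mkcond -big_ord_divisors //.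
by rewrite [RHS]big_mkcond; apply: eq_bigr => x _; rewrite !mulr_natl !mulrb.
Qed.

Definition codiv_pow n1 (d : {ffun 'I_m -> 'I_n1.+1}) : {ffun 'I_m -> 'I_n1.+1} :=
  [ffun j => inord (n1 %/ d (rev_ord j) ^ gam (rev_ord j))].

Definition codiv_root n1 (e : {ffun 'I_m -> 'I_n1.+1}) : {ffun 'I_m -> 'I_n1.+1} :=
  [ffun j => inord (iroot (gam j) (n1 %/ e (rev_ord j)))].

Lemma codiv_powE n1 (d : {ffun 'I_m -> 'I_n1.+1}) j :
  codiv_pow d j = (n1 %/ d (rev_ord j) ^ gam (rev_ord j))%N :> nat.
Proof. by rewrite ffunE inordK // ltnS leq_div. Qed.

Lemma codiv_rootE n1 (e : {ffun 'I_m -> 'I_n1.+1}) j :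
  codiv_root e j = iroot (gam j) (n1 %/ e (rev_ord j)) :> nat.
Proof. by rewrite ffunE inordK // ltnS (leq_trans (iroot_le _ _)) // leq_div. Qed.

Lemma divn_codiv_pow n1 (d : {ffun 'I_m -> 'I_n1.+1}) j : (0 < n1)%N ->
  (d j ^ gam j %| n1)%N -> (n1 %/ codiv_pow d (rev_ord j) = d j ^ gam j)%N.
Proof. by move=> n1_gt0 d_dvd; rewrite codiv_powE rev_ordK codivK. Qed.

Lemma tSsum_term_eq0 n1 (e : {ffun 'I_m -> 'I_n1.+1}) :
  ~~ [forall j, apow (gam j) (n1 %/ e (rev_ord j))] -> tSsum_term e = 0.
Proof.
move=> /forallPn[j not_pow]; rewrite /tSsum_term /Ssum_term /txi (bigD1 j) //=.
by rewrite tnth_mktuple expn1 (negbTE not_pow) andbF !mul0r.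
Qed.

Lemma codiv_pow_chain n1 (d : {ffun 'I_m -> 'I_n1.+1}) i : (0 < n1)%N ->
  (forall j, d j ^ gam j %| n1)%N -> (i <= m.+1)%N ->
  nth 1%N (n1 :: mktuple (fun j => codiv_pow d j ^ 1))%N i
  = (n1 %/ nth 1%N (n1 :: mktuple (fun j => d j ^ gam j)) (m.+1 - i))%N.
Proof.
move=> n1_gt0 d_dvd; case: i => [_|i].
  by rewrite subn0 [in RHS]nth_cons_mktuple_default ?divn1.
rewrite ltnS leq_eqVlt => /predU1P[->|i_lt].
  by rewrite subnn nth_cons_mktuple_default //= divnn n1_gt0.
have -> : (m.+1 - i.+1 = (rev_ord (Ordinal i_lt)).+1)%N by rewrite /= subSS subnSK.
by rewrite (nth_cons_mktuple _ _ _ (Ordinal i_lt)) nth_cons_mktuple expn1 codiv_powE.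
Qed.

Lemma txi_codiv_pow n1 (d : {ffun 'I_m -> 'I_n1.+1}) : (0 < n1)%N ->
  (forall j, 0 < gam j)%N -> (forall j, (0 < d j) && (d j ^ gam j %| n1))%N ->
  txi gam xi n1 (mktuple (fun j => codiv_pow d j ^ 1)%N) = xi (mktuple (fun j => d j ^ gam j)%N).
Proof.
move=> n1_gt0 gam_gt0 d_dvd; rewrite /txi big1 ?mul1r => [|j _].
  congr xi; apply: eq_mktuple => j.
  by rewrite tnth_mktuple expn1 divn_codiv_pow //; case/andP: (d_dvd j).
have /andP[d_gt0 d_dvd_n1] := d_dvd j.
by rewrite tnth_mktuple expn1 divn_codiv_pow // apow_expn // codiv_powE rev_ordK dvdn_div.
Qed.

Lemma tSsum_term_codiv_pow n1 (d : {ffun 'I_m -> 'I_n1.+1}) : (0 < n1)%N ->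
  (forall j, 0 < gam j)%N -> (forall j, (0 < d j) && (d j ^ gam j %| n1))%N ->
  tSsum_term (codiv_pow d) * \prod_(j < m) (d j ^ gam j)%:R = n1%:R ^+ m * Ssum_term gam xi f d.
Proof.
move=> n1_gt0 gam_gt0 d_dvd; have d_dvd_n1 j : (d j ^ gam j %| n1)%N by case/andP: (d_dvd j).
pose a := nth 1%N (n1 :: mktuple (fun j => d j ^ gam j))%N.
have a_dvd k : (k <= m.+1)%N -> (a k %| n1)%N.
  case: k => [//|k]; rewrite ltnS leq_eqVlt => /predU1P[->|k_lt].
    by rewrite /a nth_cons_mktuple_default.
  by rewrite /a (nth_cons_mktuple _ _ _ (Ordinal k_lt)).
rewrite /tSsum_term /Ssum_term; cbv zeta; rewrite txi_codiv_pow // -mulrA [RHS]mulrCA -/a.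
congr (_ * _); rewrite (eq_bigr (fun i : 'I_m.+1 =>
  fq (ftil m f i) (n1 %/ a (m.+1 - i)%N) (n1 %/ a (m - i)%N))) => [|i _]; last first.
  by rewrite !codiv_pow_chain ?subSS // ltnW.
rewrite (eq_bigr (fun k : 'I_m => (a k.+1)%:R)) => [|j _]; last by rewrite /a nth_cons_mktuple.
exact: prod_fq_ftil_codiv.
Qed.

Lemma codiv_powK n1 (d : {ffun 'I_m -> 'I_n1.+1}) : (0 < n1)%N -> (forall j, 0 < gam j)%N ->
  (forall j, (0 < d j) && (d j ^ gam j %| n1))%N -> codiv_root (codiv_pow d) = d.
Proof.
move=> n1_gt0 gam_gt0 d_dvd; apply/ffunP => j; apply: val_inj.
have /andP[d_gt0 d_dvd_n1] := d_dvd j.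
by rewrite /= codiv_rootE divn_codiv_pow // iroot_expn.
Qed.

Lemma codiv_rootK n1 (e : {ffun 'I_m -> 'I_n1.+1}) : (0 < n1)%N ->
  (forall j, e j %| n1)%N -> (forall j, apow (gam j) (n1 %/ e (rev_ord j))) ->
  codiv_pow (codiv_root e) = e.
Proof.
move=> n1_gt0 e_dvd e_pow; apply/ffunP => j; apply: val_inj.
have := irootP (e_pow (rev_ord j)); rewrite rev_ordK => -[_ root_pow].
by rewrite /= codiv_powE codiv_rootE rev_ordK root_pow codivK.
Qed.

Lemma codiv_pow_condE n1 (d : {ffun 'I_m -> 'I_n1.+1}) : (0 < n1)%N -> (forall j, 0 < gam j)%N ->
  [forall j, (0 < d j) && (d j ^ gam j %| n1)]%N =
  [forall j, (0 < codiv_pow d j) && (codiv_pow d j %| n1)]%N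
    && [forall j, apow (gam j) (n1 %/ codiv_pow d (rev_ord j))]
    && (codiv_root (codiv_pow d) == d).
Proof.
move=> n1_gt0 gam_gt0.
apply/forallP/idP => [d_dvd|/andP[/andP[/forallP e_dvd /forallP e_pow] /eqP d_root] j].
  rewrite codiv_powK // eqxx andbT; apply/andP; split; apply/forallP => j.
    have /andP[d_gt0 d_dvd_n1] := d_dvd (rev_ord j).
    by rewrite codiv_powE divn_gt0 ?expn_gt0 ?d_gt0 // dvdn_leq // dvdn_div.
  have /andP[d_gt0 d_dvd_n1] := d_dvd j.
  by rewrite divn_codiv_pow // apow_expn.
rewrite -d_root codiv_rootE; have [-> ->] := irootP (e_pow j).
by rewrite dvdn_div //; have /andP[] := e_dvd (rev_ord j).
Qed.

Lemma Ssum_dual (n : nat -> nat) : (0 < n 0%N)%N -> (forall j, 0 < gam j)%N ->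
  Ssum gam xi f n = Sdual (n 0%N) n.
Proof.
move=> n1_gt0 gam_gt0; rewrite Ssum_split /Sdual.
rewrite [in RHS](bigID (fun e : {ffun 'I_m -> 'I_(n 0%N).+1} =>
  [forall j, apow (gam j) (n 0%N %/ e (rev_ord j))])) /=.
rewrite [X in _ + X]big1 ?addr0 => [|e /andP[_ /tSsum_term_eq0 ->]]; last by rewrite mul0r.
rewrite [in RHS](reindex_onto (@codiv_pow (n 0%N)) (@codiv_root (n 0%N))) /=; last first.
  move=> e /andP[/forallP e_dvd /forallP e_pow]; apply: codiv_rootK => // j.
  by case/andP: (e_dvd j).
rewrite mulr_sumr; apply: eq_big => [d|d /forallP d_dvd]; first exact: codiv_pow_condE.
have -> : \prod_(j < m) (n 0%N %/ codiv_pow d (rev_ord j)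
      * (n 0%N %/ codiv_pow d (rev_ord j) %| n j.+1))%:R
    = \prod_(j < m) (d j ^ gam j)%:R * \prod_(j < m) (d j ^ gam j %| n j.+1)%:R :> C.
  rewrite -big_split; apply: eq_bigr => j _; have /andP[_ d_dvd_n1] := d_dvd j.
  by rewrite divn_codiv_pow // natrM.
rewrite [tSsum_term _ * _]mulrA tSsum_term_codiv_pow // mulrA mulKf //.
by rewrite expf_neq0 // pnatr_eq0 -lt0n.
Qed.

End Transposition.

Unset Implicit Arguments.
Set Strict Implicit.

Theorem theorem2p7 (R : realType) (m : nat) (gam : 'I_m -> nat)
    (f : nat -> nat -> R[i]) (xi : m.-tuple nat -> R[i]) (n : nat -> nat) :
  (0 < m)%N -> (forall j, 0 < gam j)%N -> (forall k, k <= m -> 0 < n k)%N ->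
  Ssum gam xi f n =
    \sum_(l : {ffun 'I_m -> 'I_(n 0%N)})
       acoef gam f xi (n 0%N) (fun j => (l j).+1)
       * \prod_(j < m) ee R (n 0%N) (n j.+1 * (l j).+1)
  /\
  Ssum gam xi f n =
    \sum_(d : {ffun 'I_m -> 'I_(n 0%N).+1} | [forall j, (0 < d j) && (d j %| n 0%N)]%N)
       alphacoef gam f xi (n 0%N) (fun j => nat_of_ord (d j))
       * \prod_(j < m) ramanujan R (d j) (n j.+1).
Proof.
(* Neither [0 < m] nor the positivity of n_2, ..., n_{m+1} is needed. *)
move=> _ gam_gt0 n_gt0; have n1_gt0 : (0 < n 0%N)%N by exact: n_gt0.
by rewrite Ssum_dual // acoef_expansion // alphacoef_expansion.
Qed.
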